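(* Let $n\ge1$, $p$ a prime, $R\subset E_n$, and $S\subset E_n$ with $|S|\geq2$. The following are equivalent: (i) $\mathcal{C}_{R,S}=\mathcal{C}_{\mathsf{pHa},S}$; (ii) $\mathcal{C}_{\mathsf{pHa},S}$ is a homogeneous $S$-adapted $p$-cone, i.e. there is $T\subset E_n$ with $\mathcal{C}_{\mathsf{pHa},S}=\{x\in\mathbb{Z}^n:F^{(i)}_T(x)\le0\ \forall i\in S\}$; (iii) for every connected component $C$ of the chain diagram $\Gamma_n(R,S)$, the integers $\#(C\cap R)$ and $\#C$ have different parity.
   Context: $E_n=\{1,\dots,n\}$, indices mod $n$; $e_i$ standard basis of $\mathbb{Z}^n$ ($e_0=e_n$). For $U\subset E_n$, $\delta_U^{(i)}=-1$ if $i\in U$, else $1$. $F^{(d)}_T(x)=\sum_{i=0}^{n-1}p^i\delta_T^{(d+i)}x_{d+i}$. Saturation of a submonoid $A\subset\mathbb{Z}^n$: $\{x:mx\in A\text{ for some }m\ge1\}$. $\mathsf{ha}^{(i)}_{R,S}=-\delta_S^{(i)}e_i-p\delta_R^{(i-1)}e_{i-1}$; $\mathcal{C}_{\mathsf{pHa},S}$ is the saturation of $\sum_{i\in S}\mathbb{N}\mathsf{ha}^{(i)}_{R,S}+\sum_{i\notin S}\mathbb{Z}\mathsf{ha}^{(i)}_{R,S}$. $\mathcal{C}_{R,S}=\{x:F^{(i)}_{T'}(x)\le0\ \forall i\in S\}$ where $T'$ is the unique subset with: for each $i$ with $i+1\notin S$, if $i\notin R$ exactly one of $i,i+1$ is in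 $T'$, and if $i\in R$ both or neither are; and for each $i\in S$, $i-1\in T'\iff i-1\in R$. The chain diagram $\Gamma_n(R,S)$ has vertices $E_n$, with $i$ and $i+1$ joined by an edge exactly when $i+1\notin S$; its connected components are the maximal sets connected by edges, namely the cyclic intervals from an element $s\in S$ to (the next element of $S$ after $s$) minus one. *)

(* E_n = {1,...,n} is identified with 'I_n via k |-> k mod n
   (so the index n, i.e. e_0 = e_n, is the ordinal 0). Z^n = functions 'I_n -> int. *)
From mathcomp Require Import all_boot all_order all_algebra.
Set Implicit Arguments. Unset Strict Implicit. Unset Printing Implicit Defensive.
Import Order.TTheory GRing.Theory Num.Theory.
Local Open Scope ring_scope.

Definition idx (n : nat) (k : nat) (j : 'I_n) : bool := val j == (k %% n)%N.

Definition memI (n : nat) (U : {set 'I_n}) (k : nat) : bool :=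
  [exists j : 'I_n, idx k j && (j \in U)].

Definition dlt (n : nat) (U : {set 'I_n}) (k : nat) : int :=
  if memI U k then -1 else 1.

Definition coord (n : nat) (x : 'I_n -> int) (k : nat) : int :=
  \sum_(j : 'I_n | idx k j) x j.

Definition Fp (n p : nat) (T : {set 'I_n}) (d : nat) (x : 'I_n -> int) : int :=
  \sum_(i < n) (p ^ i)%:R * dlt T (d + i) * coord x (d + i).

Definition evec (n : nat) (k : nat) (j : 'I_n) : int := if idx k j then 1 else 0.

(* ha^{(i)}_{R,S} = - delta_S^{(i)} e_i - p delta_R^{(i-1)} e_{i-1};
   the index i-1 is written i + (n-1) (mod n). *)
Definition ha (n p : nat) (R S : {set 'I_n}) (i : 'I_n) (j : 'I_n) : int :=
  - dlt S i * evec i j - p%:R * dlt R (i + n.-1) * evec (i + n.-1) j.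

Definition pHa_monoid (n p : nat) (R S : {set 'I_n}) (y : 'I_n -> int) : Prop :=
  exists c : 'I_n -> int, (forall i, i \in S -> 0 <= c i) /\
    forall j, y j = \sum_(i : 'I_n) c i * ha p R S i j.

Definition C_pHa (n p : nat) (R S : {set 'I_n}) (x : 'I_n -> int) : Prop :=
  exists m : nat, (0 < m)%N /\ pHa_monoid p R S (fun j => m%:Z * x j).

Definition p_cone (n p : nat) (T S : {set 'I_n}) (x : 'I_n -> int) : Prop :=
  forall i : 'I_n, i \in S -> Fp p T i x <= 0.

Definition Tprime_cond (n : nat) (R S T : {set 'I_n}) : Prop :=
  (forall i : 'I_n, ~~ memI S (i + 1) ->
     if i \in R then (i \in T) = memI T (i + 1)
     else (i \in T) != memI T (i + 1)) /\
  (forall i : 'I_n, i \in S -> memI T (i + n.-1) = memI R (i + n.-1)).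

Definition C_RS (n p : nat) (R S : {set 'I_n}) (x : 'I_n -> int) : Prop :=
  exists T : {set 'I_n}, Tprime_cond R S T /\ p_cone p T S x.

Definition chain_edge (n : nat) (S : {set 'I_n}) : rel 'I_n :=
  fun i j => (idx (i + 1) j && ~~ memI S (i + 1)) ||
             (idx (j + 1) i && ~~ memI S (j + 1)).

Definition chain_component (n : nat) (S : {set 'I_n}) (x : 'I_n) : {set 'I_n} :=
  [set y | connect (chain_edge S) x y].

(** Write [ha_comb c] for the combination sum_i c_i ha^(i); then C_pHa is the
    saturation of the [ha_comb c] with c >= 0 on S, and by linearity
    F^(r)_T (ha_comb c) = sum_u c_u F^(r)_T (ha^(u)).  The conditions defining T'
    are exactly what makes F^(r)_T' (ha^(u)) vanish for u outside S and be
    nonpositive for u in S, and testing C_pHa ⊆ cone_T on the vectors ±ha^(u)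
    shows conversely that T' is the only T with C_pHa ⊆ cone_T.  Hence (i) and
    (ii) both say C_pHa = cone_T'.
    If S and T' are disjoint, the identity F^(r) = p F^(r+1) + (1 - p^n) δ_T(r) x_r
    exhibits (p^n - 1) x as [ha_comb c] with c_t = δ_S(t) δ_T'(t) F^(t)(x) >= 0 on S.
    If s ∈ S ∩ T' and j ∈ S ∖ {s}, then (p^n + 1) ha^(s) - ha^(j) lies in cone_T' but
    not in C_pHa, because c ↦ [ha_comb c] is injective (p >= 2).
    Finally every component of Γ_n(R,S) is a cyclic interval whose only element of
    S is its first one s, and multiplying δ_T'(i+1) = -δ_R(i) δ_T'(i) along it gives
    δ_T'(s) = -(-1)^(#C + #(C ∩ R)): s ∉ T' iff the two parities differ. *)

From Pilot Require Import Defs.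
From mathcomp Require Import all_boot all_order all_algebra.
From mathcomp Require Import zify ring.
Set Implicit Arguments. Unset Strict Implicit. Unset Printing Implicit Defensive.
Import Order.TTheory GRing.Theory Num.Theory.
Local Open Scope ring_scope.

Section CyclicIndices.
Variable n : nat.
Local Notation N := n.+1.
Local Notation inZ := (@inZp n).
Implicit Types (U : {set 'I_N}) (i j r : 'I_N) (k : nat).

Lemma idx_inZp k j : idx k j = (j == inZ k).
Proof. by rewrite /idx -val_eqE. Qed.

Lemma memI_inZp U k : memI U k = (inZ k \in U).
Proof.
apply/existsP/idP => [[j /andP[]]|kU]; first by rewrite idx_inZp => /eqP <-.
by exists (inZ k); rewrite idx_inZp eqxx.
Qed.

Lemma memI_ord U i : memI U i = (i \in U).
Proof. by rewrite memI_inZp valZpK. Qed.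

Lemma dltE U i : dlt U i = if i \in U then -1 else 1.
Proof. by rewrite /dlt memI_ord. Qed.

Lemma dlt_inZp U k : dlt U k = dlt U (inZ k).
Proof. by rewrite /dlt memI_inZp memI_ord. Qed.

Lemma dlt_in U i : i \in U -> dlt U i = -1.
Proof. by rewrite dltE => ->. Qed.

Lemma dlt_notin U i : i \notin U -> dlt U i = 1.
Proof. by rewrite dltE => /negbTE ->. Qed.

Lemma dlt_sign U i : dlt U i = -1 \/ dlt U i = 1.
Proof. by rewrite dltE; case: ifP; [left|right]. Qed.

Lemma mul_dlt_self U i : dlt U i * dlt U i = 1.
Proof. by rewrite dltE; case: ifP; rewrite ?mulrNN mulr1. Qed.

Lemma prod_dlt (A : {set 'I_N}) U : \prod_(i in A) dlt U i = (-1) ^+ #|A :&: U|.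
Proof.
rewrite -prodr_const (bigID (mem U)) /= [X in _ * X]big1 => [|i /andP[_]]; last exact: dlt_notin.
by rewrite mulr1; apply: eq_big => [i|i /andP[_]]; [rewrite inE | exact: dlt_in].
Qed.

Lemma coord_inZp (x : 'I_N -> int) k : Defs.coord x k = x (inZ k).
Proof.
by rewrite /Defs.coord (eq_bigl (pred1 (inZ k))) ?big_pred1_eq // => j; rewrite idx_inZp.
Qed.

Lemma evec_inZp k j : evec k j = (j == inZ k)%:R.
Proof. by rewrite /evec idx_inZp; case: eqP. Qed.

Lemma inZp_addn1 i : inZ (i + 1) = ordS i.
Proof. by apply: val_inj; rewrite /= addn1. Qed.

Lemma inZp_addn_pred i : inZ (i + n) = ord_pred i.
Proof. by apply: val_inj; rewrite /= addnS. Qed.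

Lemma ordSE i : ordS i = i + inZ 1.
Proof. by apply: val_inj; rewrite /= modnDmr addn1. Qed.

Lemma ord_predE i : ord_pred i = i - inZ 1.
Proof. by rewrite -{2}[i]ord_predK ordSE addrK. Qed.

Lemma ord_predB i r : ord_pred i - r = ord_pred (i - r).
Proof. by rewrite !ord_predE addrAC. Qed.

Lemma subr_ordS i r : i - ordS r = ord_pred (i - r).
Proof. by rewrite ordSE ord_predE opprD addrA. Qed.

Lemma val_ord_predS i : (ord_pred i).+1 = if i == 0 then N else i.
Proof.
rewrite /= -val_eqE /= addnS /=.
by case: i => -[|k] lt_kN /=; rewrite ?add0n ?addSnnS ?modnDr modn_small // ltnW.
Qed.

Lemma iter_ordS k i : iter k (@ordS N) i = i + inZ k.
Proof.
apply: val_inj; elim: k => [|k /= ->]; first by rewrite /= mod0n addn0 modn_small.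
by rewrite !modnDmr addnS -[((i + k) %% _).+1]addn1 modnDml addn1.
Qed.

Lemma iter_ord_pred k i : iter k (@ord_pred N) i = i - inZ k.
Proof.
elim: k => [|k /= ->].
  by apply: val_inj; rewrite /= mod0n subn0 modnn addn0 modn_small.
by rewrite ord_predE -addrA -opprD; congr (_ - _); apply: val_inj; rewrite /= modnDm addn1.
Qed.

Lemma iter_ordS_reach i j : exists2 k, (k < N)%N & iter k (@ordS N) i = j.
Proof. by exists (j - i); rewrite // iter_ordS valZpK addrC subrK. Qed.

Lemma iter_ord_pred_reach i j : exists2 k, (k < N)%N & iter k (@ord_pred N) i = j.
Proof. by exists (i - j); rewrite // iter_ord_pred valZpK opprB addrC subrK. Qed.

End CyclicIndices.

Section Tprime.
Variables (n : nat) (R S : {set 'I_n.+1}).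
Local Notation N := n.+1.
Implicit Types (T X Y : {set 'I_N}) (i : 'I_N).

(* [Tstep T = T] restates the conditions defining T' (see [Tprime_condE]): i \in T'
   is forced by ordS i \in T', or by i \in R when ordS i \in S.  As S is met within
   N steps forward, N iterations from any set reach the unique fixed point. *)
Definition Tstep X : {set 'I_N} :=
  [set i | if ordS i \in S then i \in R else (ordS i \in X) == (i \in R)].

Lemma Tprime_condE T : Tprime_cond R S T <-> Tstep T = T.
Proof.
split=> [[succ_notS pred_S] | fixT].
  apply/setP => i; rewrite inE; case: ifPn => iS.
    by have := pred_S _ iS; rewrite !memI_inZp inZp_addn_pred ordSK.
  have := succ_notS i; rewrite memI_inZp inZp_addn1 => /(_ iS).
  by rewrite memI_inZp inZp_addn1; case: (i \in R); case: (i \in T); case: (ordS i \in T).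
split=> [i|u uS]; rewrite !memI_inZp ?inZp_addn1 ?inZp_addn_pred ?valZpK.
  move=> /negbTE iS; rewrite -{1 3}fixT inE iS.
  by case: (i \in R); case: (i \in T); case: (ordS i \in T).
by rewrite -{1}fixT inE ord_predK uS.
Qed.

Lemma dlt_Tstep_succ T i : Tstep T = T -> ordS i \notin S ->
  dlt T (ordS i) = - dlt R i * dlt T i.
Proof.
move=> fixT /negbTE iS; rewrite !dltE -{2}fixT inE iS.
by case: (i \in R); case: (ordS i \in T); rewrite /= ?mulN1r ?mul1r ?opprK.
Qed.

Lemma dlt_Tstep_last T i : Tstep T = T -> ordS i \in S -> dlt T i = dlt R i.
Proof. by move=> fixT iS; rewrite !dltE -fixT inE iS. Qed.

Lemma iter_Tstep_agree k X Y i d : (d < k)%N -> iter d.+1 (@ordS N) i \in S ->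
  (i \in iter k Tstep X) = (i \in iter k Tstep Y).
Proof.
elim: k i d => [//|k IHk] i d lt_dk hit /=; rewrite !inE.
case: ifP => // iS; congr (_ == _).
case: d lt_dk hit => [|d] lt_dk; first by rewrite /= iS.
by rewrite iterSr; apply: IHk.
Qed.

Definition Tprime : {set 'I_N} := iter N Tstep set0.

Variable s0 : 'I_N.
Hypothesis s0S : s0 \in S.

Lemma ordS_reach_S i : exists2 d, (d < N)%N & iter d.+1 (@ordS N) i \in S.
Proof.
have [d lt_dN reach] := iter_ordS_reach (ordS i) s0.
by exists d; rewrite // iterSr reach.
Qed.

Lemma Tstep_Tprime : Tstep Tprime = Tprime.
Proof.
apply/setP => i; have [d lt_dN reach] := ordS_reach_S i.
by rewrite /Tprime -iterS iterSr; apply: iter_Tstep_agree lt_dN reach.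
Qed.

Lemma Tstep_fixP T : Tstep T = T <-> T = Tprime.
Proof.
split=> [fixT|->]; last exact: Tstep_Tprime.
apply/setP => i; have [d lt_dN reach] := ordS_reach_S i.
by rewrite -(iter_fix N fixT); apply: iter_Tstep_agree lt_dN reach.
Qed.

Lemma Tprime_condP T : Tprime_cond R S T <-> T = Tprime.
Proof. by rewrite Tprime_condE Tstep_fixP. Qed.

End Tprime.

Section Cone.
Variables (n p : nat) (R S : {set 'I_n.+1}).
Local Notation N := n.+1.
Implicit Types (T : {set 'I_N}) (x c : 'I_N -> int) (i j r u : 'I_N).
Hypothesis p_gt1 : (1 < p)%N.

Lemma exp_ge1 k : 1 <= (p ^ k)%:R :> int.
Proof. by rewrite ler1n expn_gt0 (ltnW p_gt1). Qed.

Lemma two_exp_le_expN (k : 'I_N) : 2 * (p ^ k)%:R <= (p ^ N)%:R :> int.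
Proof.
rewrite -natrM ler_nat (leq_trans (leq_mul p_gt1 (leqnn _))) // -expnS.
by rewrite leq_pexp2l ?(ltnW p_gt1).
Qed.

Lemma expN_ge2 : 2 <= (p ^ N)%:R :> int.
Proof. by have := two_exp_le_expN 0; have := exp_ge1 0; rewrite expn0; lia. Qed.

Lemma mul_exp_ord_pred (k : 'I_N) :
  p%:R * (p ^ ord_pred k)%:R = (p ^ (if k == 0%R then N else k))%:R :> int.
Proof. by rewrite -natrM -expnS val_ord_predS; case: eqP. Qed.

Lemma Fp_ord T r x : Fp p T r x = \sum_j (p ^ (j - r)%R)%:R * dlt T j * x j.
Proof.
rewrite [RHS](reindex_inj (addrI r)); apply: eq_bigr => i _.
by rewrite addrC addKr dlt_inZp coord_inZp; congr (_ * dlt T _ * x _); apply: val_inj.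
Qed.

Lemma Fp_ext T d x y : (forall j, x j = y j) -> Fp p T d x = Fp p T d y.
Proof. by move=> xy; apply: eq_bigr => i _; rewrite !coord_inZp xy. Qed.

Lemma Fp_scale T r x (m : int) : Fp p T r (fun j => m * x j) = m * Fp p T r x.
Proof. by rewrite !Fp_ord mulr_sumr; apply: eq_bigr => j _; ring. Qed.

Lemma Fp_sum T r c (y : 'I_N -> 'I_N -> int) :
  Fp p T r (fun j => \sum_i c i * y i j) = \sum_i c i * Fp p T r (y i).
Proof.
rewrite Fp_ord; under eq_bigr do rewrite mulr_sumr; rewrite exchange_big.
by apply: eq_bigr => i _; rewrite Fp_ord mulr_sumr; apply: eq_bigr => j _; ring.
Qed.

Lemma sum_mulr_pred1 (F : 'I_N -> int) a : \sum_i F i * (i == a)%:R = F a.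
Proof. by rewrite (bigD1 a) //= eqxx mulr1 big1 ?addr0 // => i /negbTE ->; rewrite mulr0. Qed.

Lemma Fp_succ T r x :
  Fp p T r x = p%:R * Fp p T (ordS r) x + (1 - (p ^ N)%:R) * dlt T r * x r.
Proof.
suff <- : Fp p T r x - p%:R * Fp p T (ordS r) x = (1 - (p ^ N)%:R) * dlt T r * x r.
  by ring.
rewrite !Fp_ord mulr_sumr -sumrB.
rewrite -(sum_mulr_pred1 (fun j => (1 - (p ^ N)%:R) * dlt T j * x j) r).
apply: eq_bigr => j _; rewrite subr_ordS !mulrA mul_exp_ord_pred subr_eq0.
by case: eqP => [->|_]; rewrite ?subrr ?expn0 /= ?mulr0 //; ring.
Qed.

Lemma eq_ord_pred i j : (j == ord_pred i) = (ordS j == i).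
Proof. by apply/eqP/eqP => [->|<-]; rewrite ?ord_predK ?ordSK. Qed.

Definition ha_comb c j : int := \sum_i c i * ha p R S i j.

Lemma ha_combE c j : ha_comb c j = - dlt S j * c j - p%:R * dlt R j * c (ordS j).
Proof.
transitivity (\sum_(i : 'I_N) (- dlt S i * c i) * (i == j)%:R
              - \sum_(i : 'I_N) (p%:R * dlt R (ord_pred i) * c i) * (i == ordS j)%:R).
  rewrite -sumrB; apply: eq_bigr => i _; rewrite /ha /= !evec_inZp valZpK.
  rewrite inZp_addn_pred [dlt R _]dlt_inZp inZp_addn_pred eq_ord_pred !(eq_sym _ i).
  by ring.
by rewrite !sum_mulr_pred1 ordSK; ring.
Qed.

Lemma Fp_ha T r u : Fp p T r (ha p R S u) =
  - ((p ^ (u - r)%R)%:R * dlt T u * dlt S u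
     + (p ^ (if u == r then N else u - r))%:R * dlt T (ord_pred u) * dlt R (ord_pred u)).
Proof.
rewrite Fp_ord.
transitivity (- \sum_j ((p ^ (j - r)%R)%:R * dlt T j * dlt S u) * (j == u)%:R
              - \sum_j (p%:R * (p ^ (j - r)%R)%:R * dlt T j * dlt R (ord_pred u))
                       * (j == ord_pred u)%:R).
  rewrite -sumrN -sumrB; apply: eq_bigr => j _; rewrite /ha /= !evec_inZp valZpK.
  by rewrite inZp_addn_pred [dlt R _]dlt_inZp inZp_addn_pred; ring.
by rewrite !sum_mulr_pred1 ord_predB mul_exp_ord_pred subr_eq0; ring.
Qed.

Lemma Fp_ha_in T r u : Tstep R S T = T -> u \in S ->
  Fp p T r (ha p R S u) =
  if u == r then dlt T u - (p ^ N)%:R else (p ^ (u - r)%R)%:R * (dlt T u - 1).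
Proof.
move=> fixT uS; rewrite Fp_ha (dlt_in uS) (dlt_Tstep_last (i := ord_pred u) fixT) ?ord_predK //.
case: (dlt_sign R (ord_pred u)) => ->;
  by case: eqP => [->|_]; rewrite ?subrr ?expn0; ring.
Qed.

Lemma Fp_ha_notin T r u : Tstep R S T = T -> u \notin S -> u != r ->
  Fp p T r (ha p R S u) = 0.
Proof.
move=> fixT uS /negbTE ur; rewrite Fp_ha ur (dlt_notin uS).
have := dlt_Tstep_succ (i := ord_pred u) fixT; rewrite ord_predK => /(_ uS) ->.
by ring.
Qed.

Lemma Fp_ha_le0 T r u : Tstep R S T = T -> u \in S -> Fp p T r (ha p R S u) <= 0.
Proof.
move=> fixT uS; rewrite Fp_ha_in //; have := exp_ge1 N; have := exp_ge1 (u - r)%R.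
by case: eqP => _; case: (dlt_sign T u) => ->; lia.
Qed.

Lemma absz_dlt (U : {set 'I_N}) i : `|dlt U i|%N = 1%N.
Proof. by rewrite dltE; case: ifP. Qed.

(* A coefficient of maximal absolute value is p times smaller than its predecessor. *)
Lemma ha_comb_eq0 c : (forall j, ha_comb c j = 0) -> forall j, c j = 0.
Proof.
move=> c0; have [t _ t_max] := @arg_maxnP _ ord0 xpredT (fun i => `|c i|%N) isT.
have : `|c (ord_pred t)|%N = (p * `|c t|)%N.
  have /eqP := c0 (ord_pred t); rewrite ha_combE ord_predK subr_eq0 => /eqP /(congr1 absz).
  by rewrite !abszM abszN !absz_dlt natz absz_nat mul1n muln1.
have := t_max (ord_pred t) isT => le_pt_t eq_pt j; apply/eqP; rewrite -absz_eq0.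
have := t_max j isT; have := leq_mul p_gt1 (leqnn `|c t|%N); lia.
Qed.

Lemma Tstep_pHa_sub_cone T x : Tstep R S T = T -> C_pHa p R S x -> p_cone p T S x.
Proof.
move=> fixT [m [m_gt0 [c [c_ge0 mx_eq]]]] r rS.
have : m%:Z * Fp p T r x <= 0.
  rewrite -Fp_scale (Fp_ext _ _ mx_eq) Fp_sum; apply: sumr_le0 => u _.
  have [uS | uS] := boolP (u \in S).
    by apply: mulr_ge0_le0; [exact: c_ge0 | exact: Fp_ha_le0].
  by rewrite Fp_ha_notin ?mulr0 //; apply: contraNneq uS => ->.
by rewrite pmulr_rle0 // ltz_nat.
Qed.

Lemma C_pHa_ha u (a : int) : (u \in S -> 0 <= a) -> C_pHa p R S (fun j => a * ha p R S u j).
Proof.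
move=> a_ge0; exists 1%N; split=> //; exists (fun i => a * (i == u)%:R); split=> [i iS | j].
  by case: eqP => [iu | _]; rewrite ?mulr1 ?mulr0 //; apply: a_ge0; rewrite -iu.
rewrite mul1r -(sum_mulr_pred1 (fun i => a * ha p R S i j)).
by apply: eq_bigr => i _; ring.
Qed.

Lemma C_pHa_ha_comb_ge0 c : C_pHa p R S (ha_comb c) -> forall i, i \in S -> 0 <= c i.
Proof.
move=> [m [m_gt0 [c' [c'_ge0 mx_eq]]]] i iS.
have c'_eq : forall k, c' k - m%:Z * c k = 0.
  apply: ha_comb_eq0 => k; have := mx_eq k; rewrite -/(ha_comb c' k).
  have -> : ha_comb (fun i => c' i - m%:Z * c i) k = ha_comb c' k - m%:Z * ha_comb c k.
    by rewrite !ha_combE; ring.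
  by move=> <-; rewrite subrr.
have := c'_ge0 i iS; move/eqP: (c'_eq i); rewrite subr_eq0 => /eqP ->.
by rewrite pmulr_rge0 // ltz_nat.
Qed.

Lemma Tstep_cone_not_sub_pHa T s j : Tstep R S T = T -> s \in S -> s \in T ->
  j \in S -> j != s -> exists x, p_cone p T S x /\ ~ C_pHa p R S x.
Proof.
move=> fixT sS sT jS js; set K : int := (p ^ N)%:R + 1.
set c := fun i => K * (i == s)%:R - (i == j)%:R.
exists (ha_comb c); split=> [r rS | /C_pHa_ha_comb_ge0 /(_ j jS)]; last first.
  by rewrite /c (negbTE js) eqxx /= mulr0 sub0r oppr_ge0 ler10.
rewrite Fp_sum (eq_bigr (fun i => K * Fp p T r (ha p R S i) * (i == s)%:R
                             - Fp p T r (ha p R S i) * (i == j)%:R)) => [|i _]; last first.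
  by rewrite /c; ring.
rewrite sumrB !sum_mulr_pred1.
have Fs_le : Fp p T r (ha p R S s) <= -1.
  rewrite Fp_ha_in // (dlt_in sT); have := exp_ge1 N; have := exp_ge1 (s - r)%R.
  by case: eqP => _; lia.
have Fj_ge : - K <= Fp p T r (ha p R S j).
  rewrite Fp_ha_in //; have := two_exp_le_expN (j - r)%R; have := exp_ge1 N.
  by case: eqP => _; case: (dlt_sign T j) => ->; lia.
have K_ge0 : 0 <= K by have := exp_ge1 N; lia.
by have := ler_wpM2l K_ge0 Fs_le; lia.
Qed.

Lemma Tstep_cone_sub_pHa T x : Tstep R S T = T -> (forall s, s \in S -> s \notin T) ->
  p_cone p T S x -> C_pHa p R S x.
Proof.
move=> fixT ST x_cone; have := expN_ge2 => pN_ge2.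
exists (p ^ N).-1; split; first by lia.
(* [Fp_succ] is what makes these coefficients a preimage of (p^N - 1) x. *)
exists (fun t => dlt S t * dlt T t * Fp p T t x); split=> [t tS | j].
  by rewrite (dlt_in tS) (dlt_notin (ST t tS)); have := x_cone t tS; lia.
have ratio : dlt S (ordS j) * dlt T (ordS j) = - dlt R j * dlt T j.
  have [jS | jS] := boolP (ordS j \in S); last first.
    by rewrite (dlt_notin jS) mul1r (dlt_Tstep_succ fixT jS).
  rewrite (dlt_in jS) (dlt_notin (ST _ jS)) (dlt_Tstep_last fixT jS).
  by case: (dlt_sign R j) => ->; ring.
rewrite -[RHS]/(ha_comb _ j) ha_combE ratio (Fp_succ T j x) predn_int ?expn_gt0 ?(ltnW p_gt1) //.
by rewrite -natz; case: (dlt_sign S j) => ->; case: (dlt_sign T j) => ->;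
  case: (dlt_sign R j) => ->; ring.
Qed.

Variable s0 : 'I_N.
Hypothesis s0S : s0 \in S.

Lemma pHa_sub_cone_Tstep T :
  (forall x, C_pHa p R S x -> p_cone p T S x) -> Tstep R S T = T.
Proof.
move=> sub; have cone_ha u (a : int) r : (u \in S -> 0 <= a) -> r \in S ->
    a * Fp p T r (ha p R S u) <= 0.
  by move=> a_ge0 rS; rewrite -Fp_scale; apply: sub rS; exact: C_pHa_ha.
apply/setP => i; rewrite inE; case: ifPn => iS.
  have := expN_ge2; have := cone_ha (ordS i) 1 (ordS i) (fun=> ler01) iS.
  rewrite mul1r Fp_ha eqxx subrr expn0 (dlt_in iS) ordSK !dltE.
  by case: (i \in T); case: (i \in R); case: (ordS i \in T); lia.
have s0i : ordS i != s0 by apply: contraNneq iS => ->.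
have := cone_ha (ordS i) 1 s0 (fun iS' => absurd _ iS' (negP iS)) s0S.
have := cone_ha (ordS i) (-1) s0 (fun iS' => absurd _ iS' (negP iS)) s0S.
rewrite Fp_ha (negbTE s0i) (dlt_notin iS) ordSK !dltE; have := exp_ge1 (ordS i - s0)%R.
by case: (i \in T); case: (i \in R); case: (ordS i \in T); lia.
Qed.

Lemma homogeneous_cone_Tprime T : (forall x, C_pHa p R S x <-> p_cone p T S x) ->
  T = Tprime R S.
Proof. by move=> eqT; apply/(Tstep_fixP _ s0S)/pHa_sub_cone_Tstep => x /eqT. Qed.

Lemma pHa_homogeneous_iff : (1 < #|S|)%N ->
  (exists T, forall x, C_pHa p R S x <-> p_cone p T S x) <->
  (forall s, s \in S -> s \notin Tprime R S).
Proof.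
move=> S_gt1; have fixT := Tstep_Tprime R s0S.
split=> [[T eqT] | ST]; last first.
  by exists (Tprime R S) => x; split; [exact: Tstep_pHa_sub_cone | exact: Tstep_cone_sub_pHa].
have T_eq := homogeneous_cone_Tprime eqT; subst T => s sS; apply/negP => sT.
have [j jS js] : exists2 j, j \in S & j != s.
  have : (0 < #|S :\ s|)%N by rewrite (cardsD1 s S) sS in S_gt1.
  by case/card_gt0P => j; rewrite in_setD1 => /andP[js jS]; exists j.
have [x [x_cone x_pHa]] := Tstep_cone_not_sub_pHa fixT sS sT jS js.
by apply: x_pHa; apply/eqT.
Qed.

End Cone.

Section ChainComponents.
Variables (n : nat) (S : {set 'I_n.+1}).
Local Notation N := n.+1.
Local Notation edge := (chain_edge S).
Local Notation C c := (chain_component S c).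
Implicit Types (i a b c t u : 'I_N).

Lemma chain_edgeE a b :
  edge a b = ((b == ordS a) && (ordS a \notin S)) || ((a == ordS b) && (ordS b \notin S)).
Proof. by rewrite /chain_edge !idx_inZp !memI_inZp !inZp_addn1. Qed.

Fixpoint back_to_S f i : 'I_N :=
  if f is f'.+1 then (if i \in S then i else back_to_S f' (ord_pred i)) else i.

Lemma back_to_S_in f k i :
  iter k (@ord_pred N) i \in S -> (k <= f)%N -> back_to_S f i \in S.
Proof.
elim: f k i => [|f IHf] [|k] i //= hit le_kf; first by rewrite hit.
by case: ifP => // _; apply: IHf le_kf; rewrite -iterSr.
Qed.

Lemma back_to_S_stable f g i : back_to_S f i \in S -> back_to_S (f + g) i = back_to_S f i.
Proof.
elim: f i => [|f IHf] i /=; first by case: g => [|g] //= ->.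
by case: ifP => // _; apply: IHf.
Qed.

Lemma connect_back_to_S f i : connect edge i (back_to_S f i).
Proof.
elim: f i => [|f IHf] i /=; first exact: connect0.
case: ifPn => iS; first exact: connect0.
apply: connect_trans (IHf _); apply: connect1.
by rewrite chain_edgeE ord_predK eqxx iS orbT.
Qed.

(* The first element of S met walking backwards from i: the unique element of S
   in the component of i. *)
Definition chain_head i := back_to_S N i.

Variable s0 : 'I_N.
Hypothesis s0S : s0 \in S.

Lemma chain_head_in i : chain_head i \in S.
Proof.
have [k lt_kN reach] := iter_ord_pred_reach i s0.
by apply: (back_to_S_in (k := k)); [rewrite reach | exact: ltnW].
Qed.

Lemma chain_head_id i : i \in S -> chain_head i = i.
Proof. by rewrite /chain_head /= => ->. Qed.

Lemma chain_head_pred i : i \notin S -> chain_head i = chain_head (ord_pred i).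
Proof.
move=> /negbTE iS.
have head_i : chain_head i = back_to_S n (ord_pred i) by rewrite /chain_head /= iS.
have := back_to_S_stable (f := n) (i := ord_pred i) 1.
by rewrite addn1 -head_i => /(_ (chain_head_in i)) <-.
Qed.

Lemma chain_head_edge a b : edge a b -> chain_head a = chain_head b.
Proof.
rewrite chain_edgeE => /orP[] /andP[/eqP -> aS]; first by rewrite [RHS]chain_head_pred ?ordSK.
by rewrite chain_head_pred ?ordSK.
Qed.

Lemma chain_head_component c y : y \in C c -> chain_head y = chain_head c.
Proof.
rewrite inE => cy.
have head_closed : closed edge [pred z | chain_head z == chain_head c].
  by move=> a b /chain_head_edge ab; rewrite !inE ab.
by have := closed_connect head_closed cy; rewrite !inE eqxx => /esym /eqP.
Qed.

Lemma chain_head_mem c : chain_head c \in C c.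
Proof. by rewrite inE connect_back_to_S. Qed.

Lemma component_S c y : y \in C c -> y \in S -> y = chain_head c.
Proof. by move=> cy yS; rewrite -(chain_head_component cy) chain_head_id. Qed.

Lemma component_ordS c t : t \in C c -> ordS t \notin S -> ordS t \in C c.
Proof.
rewrite !inE => ct tS; apply: connect_trans ct _; apply: connect1.
by rewrite chain_edgeE eqxx tS.
Qed.

Lemma component_ord_pred c u : u \in C c -> u \notin S -> ord_pred u \in C c.
Proof.
rewrite !inE => cu uS; apply: connect_trans cu _; apply: connect1.
by rewrite chain_edgeE ord_predK eqxx uS orbT.
Qed.

Lemma prod_component_ordS c (F : 'I_N -> int) :
  \prod_(t in C c | ordS t \notin S) F (ordS t) = \prod_(u in C c | u != chain_head c) F u.
Proof.
rewrite [RHS](reindex_inj (@ordS_inj N)); apply: eq_bigl => t /=.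
apply/andP/andP => [[ct tS] | [ct neq]].
  by split; [exact: component_ordS | apply: contraNneq tS => ->; exact: chain_head_in].
have tS : ordS t \notin S by apply: contra neq => /(component_S ct) ->.
by split=> //; rewrite -[t]ordSK; exact: component_ord_pred.
Qed.

Variables (R T : {set 'I_N}).
Hypothesis fixT : Tstep R S T = T.

(* Multiply dlt T (ordS t) = - dlt R t * dlt T t over the elements t of the
   component with ordS t \notin S: ordS maps them onto the elements other than
   the head, so the product telescopes. *)
Lemma dlt_chain_head c :
  dlt T (chain_head c) = - (-1) ^+ #|C c| * (-1) ^+ #|C c :&: R|.
Proof.
set D := C c; set s := chain_head c; have sD : s \in D := chain_head_mem c.
have head_sq : dlt T s
    = \prod_(t in D) dlt T t * \prod_(t in D | ordS t \notin S) dlt T (ordS t).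
  rewrite (prod_component_ordS c (fun u => dlt T u)) (bigD1 s) //= -mulrA -big_split /=.
  by rewrite big1 ?mulr1 // => t _; exact: mul_dlt_self.
have links : \prod_(t in D) dlt T t * \prod_(t in D | ordS t \notin S) dlt T (ordS t)
           = \prod_(t in D | ordS t \notin S) (-1) * \prod_(t in D) dlt R t.
  rewrite [\prod_(t in D) dlt T t](bigID (fun t => ordS t \notin S)) /=.
  rewrite [\prod_(t in D) dlt R t](bigID (fun t => ordS t \notin S)) /=.
  have -> : \prod_(t in D | ~~ (ordS t \notin S)) dlt T t
          = \prod_(t in D | ~~ (ordS t \notin S)) dlt R t.
    by apply: eq_bigr => t /andP[_ /negPn tS]; exact: dlt_Tstep_last fixT tS.
  rewrite mulrAC -big_split mulrA -big_split /=; congr (_ * _).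
  apply: eq_bigr => t /andP[_ tS].
  by rewrite (dlt_Tstep_succ fixT tS) mulrCA mul_dlt_self mulr1 mulN1r.
have sign_card : \prod_(t in D | ordS t \notin S) (-1 : int) = - (-1) ^+ #|D|.
  by rewrite (prod_component_ordS c (fun=> -1)) -prodr_const [in RHS](bigD1 s) //= mulN1r opprK.
by rewrite head_sq links sign_card prod_dlt.
Qed.

Lemma chain_head_notin_parity c :
  (chain_head c \notin T) = (odd #|C c :&: R| != odd #|C c|).
Proof.
have := dlt_chain_head c; rewrite dltE -(signr_odd _ #|C c|) -(signr_odd _ #|C c :&: R|).
by case: (chain_head c \in T); case: (odd #|C c|); case: (odd #|C c :&: R|).
Qed.

End ChainComponents.

Theorem mainTheorem7 (n p : nat) (R S : {set 'I_n}) :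
  (0 < n)%N -> prime p -> (1 < #|S|)%N ->
  ((forall x, C_RS p R S x <-> C_pHa p R S x) <->
   (exists T : {set 'I_n}, forall x, C_pHa p R S x <-> p_cone p T S x)) /\
  ((exists T : {set 'I_n}, forall x, C_pHa p R S x <-> p_cone p T S x) <->
   (forall c : 'I_n,
      odd #|chain_component S c :&: R| != odd #|chain_component S c|)).
Proof.
case: n R S => [//|n] R S _ /prime_gt1 p_gt1 S_gt1.
have [s0 s0S] : exists s0, s0 \in S by apply/card_gt0P; exact: ltnW.
have fixT := Tstep_Tprime R s0S.
have C_RS_Tprime x : C_RS p R S x <-> p_cone p (Tprime R S) S x.
  split=> [[T [/(Tprime_condP _ s0S) -> //]] | x_cone].
  by exists (Tprime R S); split=> //; apply/(Tprime_condP _ s0S).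
split; split.
- by move=> eqC; exists (Tprime R S) => x; move: (eqC x) (C_RS_Tprime x); tauto.
- move=> [T eqT] x; have T_eq := homogeneous_cone_Tprime p_gt1 s0S eqT; subst T.
  by move: (eqT x) (C_RS_Tprime x); tauto.
- move/(pHa_homogeneous_iff R p_gt1 s0S S_gt1) => ST c.
  by rewrite -(chain_head_notin_parity s0S fixT); apply: ST; exact: chain_head_in s0S c.
- move=> parity; apply/(pHa_homogeneous_iff R p_gt1 s0S S_gt1) => s sS.
  by rewrite -(chain_head_id sS) (chain_head_notin_parity s0S fixT).
Qed.
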